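(* Let $k\ge 2$ and let $a\in A_i$ be an additive agent. Suppose an allocation $(G_1,\dots,G_k)$ is PROP$(k-1)$ for $a$. Then: (a) the allocation is $1/k$-fraction-MMS-fair for $a$; moreover the factor $1/k$ is tight: there exist an additive agent and an allocation among $k$ groups that is EF1 (hence PROP$(k-1)$) for that agent such that the agent's utility is exactly $\frac1k$ of her maximin share $\mathrm{MMS}^k$; (b) the allocation is 1-out-of-$(2k-1)$ MMS-fair for $a$; moreover $2k-1$ is tight: there exist an additive agent and an allocation among $k$ groups that is EF1 (hence PROP$(k-1)$) for that agent but not 1-out-of-$(2k-2)$ MMS-fair for her; (c) if $a$ is binary, the allocation is MMS-fair for $a$; moreover, for a binary agent, MMS-fairness implies PROP$(k-1)$.
   Context: There is a finite set $G$ of goods and $k\ge 2$ groups $A_1,\dots,A_k$ of agents. Each agent $a$ has a utility function $u_a:2^G\to\mathbb{R}_{\ge 0}$; it is additive if $u_a(X)=\sum_{g\in X}u_a(\{g\})$, and binary if additive with $u_a(\{g\})\in\{0,1\}$ for every good $g$. An allocation is a partition $(G_1,\dots,G_k)$ of $G$; group $A_i$ receives $G_i$ and each agent $a\in A_i$ gets $u_a(G_i)$. For an agent $a\in A_i$ and integer $c\ge 0$: the allocation is EF$c$ for $a$ if for every $i'$ there is $C\subseteq G_{i'}$, $|C|\le c$, with $u_a(G_i)\ge u_a(G_{i'}\setminus C)$; it is PROP$c$ for $a$ if there is $C\subseteq G\setminus G_i$, $|C|\le c$, with $u_a(G_i)\ge\frac1k u_a(G\setminus C)$. For an integer $c\ge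 1$, $\mathrm{MMS}^c_a(G)=\max\min(u_a(P_1),\dots,u_a(P_c))$, the maximum over all partitions $(P_1,\dots,P_c)$ of $G$ into $c$ sets. The allocation is MMS-fair for $a$ if $u_a(G_i)\ge \mathrm{MMS}^k_a(G)$; 1-out-of-$c$ MMS-fair for $a$ (for $c\ge k$) if $u_a(G_i)\ge\mathrm{MMS}^c_a(G)$; $q$-fraction-MMS-fair for $a$ if $u_a(G_i)\ge q\,\mathrm{MMS}^k_a(G)$. *)

From HB Require Import structures.
From mathcomp Require Import all_boot all_order all_algebra.
Set Implicit Arguments. Unset Strict Implicit. Unset Printing Implicit Defensive.
Import Order.TTheory GRing.Theory Num.Theory.
Local Open Scope ring_scope.

(* A partition of the goods G into n (possibly empty) labelled parts is a
   function assigning each good its part; [bundle P j] is the j-th part. *)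
Definition bundle (G : finType) (n : nat) (P : {ffun G -> 'I_n}) (j : 'I_n)
  : {set G} := [set g | P g == j].

Definition nonneg_util (R : realFieldType) (G : finType) (u : {set G} -> R) :=
  forall X : {set G}, 0 <= u X.

Definition additive_util (R : realFieldType) (G : finType) (u : {set G} -> R) :=
  forall X : {set G}, u X = \sum_(g in X) u [set g].

Definition binary_util (R : realFieldType) (G : finType) (u : {set G} -> R) :=
  additive_util u /\ forall g : G, u [set g] = 0 \/ u [set g] = 1.

Definition EFc (R : realFieldType) (G : finType) (k : nat) (u : {set G} -> R)
  (A : {ffun G -> 'I_k}) (i : 'I_k) (c : nat) :=
  forall i' : 'I_k, exists C : {set G},
    [/\ C \subset bundle A i', (#|C| <= c)%N & u (bundle A i' :\: C) <= u (bundle A i)].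

Definition PROPc (R : realFieldType) (G : finType) (k : nat) (u : {set G} -> R)
  (A : {ffun G -> 'I_k}) (i : 'I_k) (c : nat) :=
  exists C : {set G},
    [/\ C \subset ~: bundle A i, (#|C| <= c)%N &
        k%:R^-1 * u (~: C) <= u (bundle A i)].

(* min over the c parts of a partition (the identity element u setT is an upper
   bound of every part for nonnegative additive_util u, and c >= 1 in all uses). *)
Definition part_min (R : realFieldType) (G : finType) (c : nat) (u : {set G} -> R)
  (P : {ffun G -> 'I_c}) : R :=
  \big[Num.min/u setT]_(j < c) u (bundle P j).

(* MMS^c_a(G): max over all partitions of G into c sets of the min part value.
   (identity element 0 is below every value for nonnegative u.) *)
Definition MMS (R : realFieldType) (G : finType) (c : nat) (u : {set G} -> R) : R :=
  \big[Num.max/0]_(P : {ffun G -> 'I_c}) part_min u P.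

Definition MMS_fair (R : realFieldType) (G : finType) (k : nat) (u : {set G} -> R)
  (A : {ffun G -> 'I_k}) (i : 'I_k) := MMS k u <= u (bundle A i).

Definition one_out_of_MMS_fair (R : realFieldType) (G : finType) (k : nat)
  (u : {set G} -> R) (A : {ffun G -> 'I_k}) (i : 'I_k) (c : nat) :=
  MMS c u <= u (bundle A i).

Definition frac_MMS_fair (R : realFieldType) (G : finType) (k : nat)
  (u : {set G} -> R) (A : {ffun G -> 'I_k}) (i : 'I_k) (q : R) :=
  q * MMS k u <= u (bundle A i).

From HB Require Import structures.
From mathcomp Require Import all_boot all_order all_algebra.
From mathcomp Require Import zify.
Set Implicit Arguments. Unset Strict Implicit. Unset Printing Implicit Defensive.
Import Order.TTheory GRing.Theory Num.Theory.
Local Open Scope ring_scope.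

(* PROP(d) yields a set C of at most d goods outside the agent's bundle A_i
   with k u(A_i) >= u(G \ C).  In a partition into c parts at most |C| parts
   meet C and the other c - |C| lie inside G \ C, so u(G \ C) >= (c - d) MMS^c;
   with d = k - 1 this gives MMS^k <= k u(A_i) (c = k) and MMS^(2k-1) <= u(A_i)
   (c = 2k - 1).  For a binary agent with n valued goods, a of them in A_i,
   everything is counting: MMS^k = n / k (dealing round-robin attains it), and
   both MMS-fairness and PROP(k-1) amount to n < k (a + 1).
   For tightness, each group gets s goods worth 1 and one good worth k, except
   that the agent's own group's big good is worthless: the allocation is EF1
   and worth s to her, while MMS^k = k for s = 1 and MMS^(2k-2) >= k for
   s = k - 1. *)

Lemma sumr_indicator (R : numDomainType) (T : finType) (X S : {set T}) :
  \sum_(g in X) ((g \in S)%:R : R) = #|X :&: S|%:R.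
Proof.
rewrite -sum1_card natr_sum (big_setID S) /= [X in _ + X]big1 => [|g].
  by rewrite addr0; apply: eq_bigr => g /setIP [_ ->].
by rewrite inE => /andP [/negbTE ->].
Qed.

Lemma exists_subset_card (T : finType) (B : {set T}) (m : nat) :
  (m <= #|B|)%N -> exists2 C : {set T}, C \subset B & #|C| = m.
Proof.
rewrite -bin_gt0 -cards_draws => /card_gt0P [C].
by rewrite inE => /andP [sCB /eqP]; exists C.
Qed.

Section PartMin.
Variables (R : realFieldType) (G : finType) (u : {set G} -> R).

Lemma part_min_le_bundle (c : nat) (P : {ffun G -> 'I_c}) (j : 'I_c) :
  part_min u P <= u (bundle P j).
Proof. exact: bigmin_le. Qed.

Lemma part_min_le_MMS (c : nat) (P : {ffun G -> 'I_c}) : part_min u P <= MMS c u.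
Proof. exact: (le_bigmax _ (fun P => part_min u P)). Qed.

Lemma MMS_ge0 (c : nat) : 0 <= MMS c u.
Proof. exact: bigmax_ge_id. Qed.

End PartMin.

Section Additive.
Variables (R : realFieldType) (G : finType) (u : {set G} -> R).
Hypotheses (u_ge0 : nonneg_util u) (u_add : additive_util u).

Lemma subset_le_util (A B : {set G}) : A \subset B -> u A <= u B.
Proof.
move=> sAB; rewrite [u B]u_add (big_setID A) -!u_add /=.
by rewrite (setIidPr sAB) lerDl.
Qed.

Lemma sum_util_bundles (c : nat) (P : {ffun G -> 'I_c}) (J : {set 'I_c}) :
  \sum_(j in J) u (bundle P j) = u [set g | P g \in J].
Proof.
rewrite u_add (partition_big P (mem J)) => [|g]; last by rewrite inE.
apply: eq_bigr => j jJ; rewrite u_add; apply: eq_bigl => g.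
by rewrite !inE; case: (P g =P j) => [->|]; rewrite ?jJ ?andbF.
Qed.

Lemma part_min_ge0 (c : nat) (P : {ffun G -> 'I_c}) : 0 <= part_min u P.
Proof. exact: le_bigmin. Qed.

(* At most [#|C|] parts of [P] meet [C]; each of the others lies in [~: C]. *)
Lemma part_min_le_util_setC (c : nat) (P : {ffun G -> 'I_c}) (C : {set G}) :
  (c - #|C|)%:R * part_min u P <= u (~: C).
Proof.
set J := [set j | [disjoint bundle P j & C]].
have cardJ : (c - #|C| <= #|J|)%N.
  have sJC : ~: J \subset P @: C.
    apply/subsetP => j; rewrite !inE => /pred0Pn [g /andP [/= gj gC]].
    by move: gj; rewrite inE => /eqP <-; apply: imset_f.
  have := cardsC J; have := subset_leq_card sJC; have := leq_imset_card P C.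
  rewrite card_ord; lia.
apply: le_trans (_ : #|J|%:R * part_min u P <= _).
  by rewrite ler_wpM2r ?part_min_ge0 ?ler_nat.
rewrite mulr_natl -sumr_const.
apply: le_trans (_ : \sum_(j in J) u (bundle P j) <= _).
  by apply: ler_sum => j _; apply: part_min_le_bundle.
rewrite sum_util_bundles; apply: subset_le_util; apply/subsetP => g.
rewrite !inE => /pred0P/(_ g); rewrite /= !inE eqxx /=; exact: negbT.
Qed.

Lemma MMS_le_util_setC (c : nat) (C : {set G}) :
  (c - #|C|)%:R * MMS c u <= u (~: C).
Proof.
rewrite /MMS; elim/big_ind: _ => [|x y hx hy|P _].
- by rewrite mulr0.
- by rewrite /Order.max; case: ifP.
- exact: part_min_le_util_setC.
Qed.

Lemma PROPc_MMS_le (k d c : nat) (A : {ffun G -> 'I_k}) (i : 'I_k) :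
  (0 < k)%N -> PROPc u A i d -> (c - d)%:R * MMS c u <= k%:R * u (bundle A i).
Proof.
move=> k_gt0 [C [_ cardC]]; rewrite ler_pdivrMl ?ltr0n // => hP.
apply: le_trans hP; apply: le_trans (MMS_le_util_setC c C).
by rewrite ler_wpM2r ?MMS_ge0 // ler_nat leq_sub2l.
Qed.

End Additive.

Lemma PROPc_frac_MMS_fair (R : realFieldType) (k : nat) (G : finType)
  (u : {set G} -> R) (A : {ffun G -> 'I_k}) (i : 'I_k) :
  (0 < k)%N -> nonneg_util u -> additive_util u -> PROPc u A i k.-1 ->
  frac_MMS_fair u A i k%:R^-1.
Proof.
move=> k_gt0 u_ge0 u_add /(PROPc_MMS_le u_ge0 u_add k k_gt0).
have -> : (k - k.-1)%N = 1%N by lia.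
by rewrite mul1r /frac_MMS_fair ler_pdivrMl ?ltr0n.
Qed.

Lemma PROPc_one_out_of_MMS_fair (R : realFieldType) (k : nat) (G : finType)
  (u : {set G} -> R) (A : {ffun G -> 'I_k}) (i : 'I_k) :
  (0 < k)%N -> nonneg_util u -> additive_util u -> PROPc u A i k.-1 ->
  one_out_of_MMS_fair u A i (2 * k - 1).
Proof.
move=> k_gt0 u_ge0 u_add /(PROPc_MMS_le u_ge0 u_add (2 * k - 1) k_gt0).
have -> : (2 * k - 1 - k.-1)%N = k by lia.
by rewrite ler_pM2l ?ltr0n.
Qed.

(* Deal the goods of [V] round-robin, by their rank in [enum V]. *)
Lemma exists_bundles_card_ge (G : finType) (c : nat) (V : {set G}) :
  (0 < c)%N -> exists P : {ffun G -> 'I_c},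
    forall j, (#|V| %/ c <= #|bundle P j :&: V|)%N.
Proof.
move=> c_gt0; exists [ffun g => Ordinal (ltn_pmod (index g (enum V)) c_gt0)] => j.
set m := (#|V| %/ c)%N; have [-> //|m_gt0] := posnP m.
have [g0 _] : exists g0, g0 \in V.
  by apply/set0Pn; rewrite -card_gt0; apply: leq_trans m_gt0 (leq_div _ _).
pose f (t : 'I_m) := nth g0 (enum V) (j + c * t).
have f_rank (t : 'I_m) : (j + c * t < size (enum V))%N.
  have : (c * t.+1 <= m * c)%N by rewrite mulnC leq_mul2r ltn_ord orbT.
  have := leq_divM #|V| c; rewrite -/m -cardE mulnS; have := ltn_ord j; lia.
have index_f (t : 'I_m) : index (f t) (enum V) = (j + c * t)%N.
  by rewrite index_uniq ?enum_uniq.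
have f_inj : injective f.
  move=> t1 t2 /(congr1 (index^~ (enum V))); rewrite !index_f => e.
  by apply/val_inj/eqP; rewrite -(eqn_pmul2l c_gt0) -(eqn_add2l j) e.
rewrite -[m]card_ord -(card_imset _ f_inj); apply: subset_leq_card.
apply/subsetP => _ /imsetP [t _ ->]; rewrite !inE ffunE.
rewrite -mem_enum mem_nth // andbT; apply/eqP/val_inj => /=.
by rewrite index_f addnC mulnC modnMDl modn_small.
Qed.

Section Binary.
Variables (R : realFieldType) (G : finType) (u : {set G} -> R).
Hypothesis u_bin : binary_util u.

Definition valued_goods : {set G} := [set g | u [set g] == 1].

Lemma binary_utilE (X : {set G}) : u X = #|X :&: valued_goods|%:R.
Proof.
have [u_add u01] := u_bin; rewrite u_add -sumr_indicator.
apply: eq_bigr => g _; rewrite inE.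
by case: (u01 g) => ->; rewrite ?eqxx ?(eq_sym 0) ?oner_eq0.
Qed.

Lemma binary_util_ge0 : nonneg_util u.
Proof. by move=> X; rewrite binary_utilE ler0n. Qed.

Lemma binary_MMS (k : nat) : (0 < k)%N -> MMS k u = (#|valued_goods| %/ k)%:R.
Proof.
have [u_add _] := u_bin; have u_ge0 := binary_util_ge0.
move=> k_gt0; apply/le_anti/andP; split.
  apply: bigmax_le => [|P _]; first by rewrite ler0n.
  have := part_min_le_util_setC u_ge0 u_add P set0.
  rewrite /part_min; have [j _ ->] := eq_bigmin (Ordinal k_gt0) xpredT
    (fun j => u (bundle P j)) erefl
    (fun j _ => subset_le_util u_ge0 u_add (subsetT _)).
  rewrite setC0 cards0 subn0 !binary_utilE setTI -natrM !ler_nat => h.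
  by rewrite leq_divRL // mulnC.
have [P cardP] := exists_bundles_card_ge valued_goods k_gt0.
apply: le_trans (part_min_le_MMS u P); apply: le_bigmin => [|j _].
  by rewrite binary_utilE setTI ler_nat leq_div.
by rewrite binary_utilE ler_nat.
Qed.

Lemma binary_PROPcE (k : nat) (A : {ffun G -> 'I_k}) (i : 'I_k) : (0 < k)%N ->
  PROPc u A i k.-1 <-> (#|valued_goods| %/ k <= #|bundle A i :&: valued_goods|)%N.
Proof.
move=> k_gt0; rewrite -ltnS ltn_divLR //.
set V := valued_goods; set a := #|bundle A i :&: V|.
have cardV (C : {set G}) : (#|~: C :&: V| + #|C :&: V| = #|V|)%N.
  by rewrite -(cardsID C V) setDE addnC !(setIC V).
split=> [[C [_ cardC]]|ltVa].
  rewrite ler_pdivrMl ?ltr0n // !binary_utilE -natrM ler_nat -/V -/a => leCa.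
  have := cardV C; have := subset_leq_card (subsetIl C V); nia.
pose W := ~: bundle A i :&: V.
have [C sCW cardC] := exists_subset_card (geq_minl #|W| k.-1).
have sCV : C \subset V by apply: subset_trans sCW (subsetIr _ _).
exists C; split.
- exact: subset_trans sCW (subsetIl _ _).
- by rewrite cardC geq_minr.
rewrite ler_pdivrMl ?ltr0n // !binary_utilE -natrM ler_nat -/V -/a.
have := cardV C; have := cardV (bundle A i); rewrite (setIidPl sCV) -/W -/a.
by move: cardC; case: leqP; nia.
Qed.

Lemma binary_MMS_fairE (k : nat) (A : {ffun G -> 'I_k}) (i : 'I_k) : (0 < k)%N ->
  MMS_fair u A i = (#|valued_goods| %/ k <= #|bundle A i :&: valued_goods|)%N.
Proof. by move=> k_gt0; rewrite /MMS_fair binary_MMS // binary_utilE ler_nat. Qed.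

End Binary.

Definition weight_util (R : realFieldType) (G : finType) (w : G -> R)
  (X : {set G}) : R := \sum_(g in X) w g.

Lemma weight_util_additive (R : realFieldType) (G : finType) (w : G -> R) :
  additive_util (weight_util w).
Proof. by move=> X; apply: eq_bigr => g _; rewrite /weight_util big_set1. Qed.

Lemma weight_util_ge0 (R : realFieldType) (G : finType) (w : G -> R) :
  (forall g, 0 <= w g) -> nonneg_util (weight_util w).
Proof. by move=> w_ge0 X; apply: sumr_ge0. Qed.

(* Group [j] owns the small goods [(j, Some t)], worth 1, and the big good
   [(j, None)], worth [k] except in group 0, which is the agent's group. *)
Section Tight.
Variables (R : realFieldType) (k s : nat).
Local Notation good := ('I_k * option 'I_s)%type.

Definition tight_weight (g : good) : R :=
  if g.2 is Some _ then 1 else if val g.1 == 0%N then 0 else k%:R.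

Definition tight_util : {set good} -> R := weight_util tight_weight.

Definition tight_alloc : {ffun good -> 'I_k} := [ffun g => g.1].

Definition small_goods : {set good} := [set g | g.2 != None].
Definition big_goods : {set good} := [set g | (g.2 == None) && (val g.1 != 0%N)].

Lemma tight_util_ge0 : nonneg_util tight_util.
Proof.
by apply: weight_util_ge0 => -[j [t|]]; rewrite /tight_weight //=; case: ifP.
Qed.

Lemma tight_util_additive : additive_util tight_util.
Proof. exact: weight_util_additive. Qed.

Lemma tight_utilE (X : {set good}) :
  tight_util X = #|X :&: small_goods|%:R + k%:R * #|X :&: big_goods|%:R.
Proof.
rewrite -!sumr_indicator mulr_sumr -big_split /=; apply: eq_bigr => -[j o] _.
rewrite /tight_weight !inE /=; case: o => [t|] /=; first by rewrite mulr0 addr0.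
by case: eqP => _ /=; rewrite ?mulr0 ?mulr1 add0r.
Qed.

Lemma small_goods_subset_setC_big : small_goods \subset ~: big_goods.
Proof. by apply/subsetP => -[j [t|]]; rewrite !inE. Qed.

Lemma card_small_goods : #|small_goods| = (k * s)%N.
Proof.
have -> : small_goods = setX setT [set~ None] by apply/setP => -[j o]; rewrite !inE.
by rewrite cardsX cardsT card_ord cardsC1 card_option card_ord.
Qed.

Lemma card_bundle_small_goods (j : 'I_k) :
  #|bundle tight_alloc j :&: small_goods| = s.
Proof.
have -> : bundle tight_alloc j :&: small_goods = setX [set j] [set~ None].
  by apply/setP => -[j' o]; rewrite !inE ffunE.
by rewrite cardsX cards1 cardsC1 card_option card_ord mul1n.
Qed.

Lemma le_tight_util_small_goods (Y : {set good}) :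
  small_goods \subset Y -> (k * s)%:R <= tight_util Y.
Proof.
move=> sY; apply: le_trans (subset_le_util tight_util_ge0 tight_util_additive sY).
by rewrite tight_utilE setIid card_small_goods lerDl mulr_ge0.
Qed.

Lemma le_tight_util_big_good (Y : {set good}) (j : 'I_k) :
  val j != 0%N -> (j, None) \in Y -> k%:R <= tight_util Y.
Proof.
rewrite -sub1set => j_neq0 /(subset_le_util tight_util_ge0 tight_util_additive).
apply: le_trans.
by rewrite /tight_util /weight_util big_set1 /tight_weight /= (negbTE j_neq0).
Qed.

Hypothesis k_gt0 : (0 < k)%N.

Lemma card_big_goods : #|big_goods| = k.-1.
Proof.
have -> : big_goods = setX [set~ Ordinal k_gt0] [set None].
  by apply/setP => -[j o]; rewrite !inE /= andbC.
by rewrite cardsX cardsC1 card_ord cards1 muln1.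
Qed.

Lemma tight_util_setT : tight_util setT = (k * s + k * k.-1)%:R.
Proof.
by rewrite tight_utilE !setTI card_small_goods card_big_goods natrD !natrM.
Qed.

Lemma tight_util_bundle0 : tight_util (bundle tight_alloc (Ordinal k_gt0)) = s%:R.
Proof.
rewrite tight_utilE card_bundle_small_goods; set X := _ :&: big_goods.
suff -> : X = set0 by rewrite cards0 mulr0 addr0.
by apply/setP => -[j o]; rewrite !inE ffunE /=; case: eqP => // ->; rewrite andbF.
Qed.

Lemma tight_EF1 : EFc tight_util tight_alloc (Ordinal k_gt0) 1.
Proof.
move=> j; exists (bundle tight_alloc j :&: big_goods); split.
- exact: subsetIl.
- have sB : bundle tight_alloc j :&: big_goods \subset [set (j, None)].
    apply/subsetP => -[j' o]; rewrite !inE ffunE /=.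
    by case/andP => /eqP -> /andP [/eqP -> _].
  by have := subset_leq_card sB; rewrite cards1.
- rewrite tight_util_bundle0 tight_utilE setDIr setDv set0U setDE -!setIA.
  rewrite [~: _ :&: big_goods]setIC setICr setI0 cards0 mulr0 addr0.
  by rewrite (setIidPr small_goods_subset_setC_big) card_bundle_small_goods.
Qed.

Lemma tight_PROPc : PROPc tight_util tight_alloc (Ordinal k_gt0) k.-1.
Proof.
exists big_goods; split.
- apply/subsetP => -[j o]; rewrite !inE ffunE /= => /andP [_].
  by apply: contra => /eqP ->.
- by rewrite card_big_goods.
rewrite tight_util_bundle0 tight_utilE [~: _ :&: big_goods]setIC setICr cards0.
rewrite mulr0 addr0 (setIidPr small_goods_subset_setC_big) card_small_goods natrM.
by rewrite mulKf // pnatr_eq0 -lt0n.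
Qed.

End Tight.

Lemma tight_MMS_one (R : realFieldType) (k : nat) :
  (0 < k)%N -> MMS k (@tight_util R k 1) = k%:R.
Proof.
move=> k_gt0; have k_pos : (0 : R) < k%:R by rewrite ltr0n.
apply/le_anti/andP; split.
  have := MMS_le_util_setC (@tight_util_ge0 R k 1)
    (@tight_util_additive R k 1) k set0.
  rewrite cards0 subn0 setC0 tight_util_setT // -mulnDr add1n prednK // natrM.
  by rewrite ler_pM2l.
pose P : {ffun 'I_k * option 'I_1 -> 'I_k} :=
  [ffun g => if g.2 is Some _ then Ordinal k_gt0 else g.1].
apply: le_trans (part_min_le_MMS _ P); apply: le_bigmin => [|j _].
  by rewrite tight_util_setT // ler_nat; nia.
have [->|j_neq0] := eqVneq j (Ordinal k_gt0).
  rewrite -[k in k%:R]muln1; apply: le_tight_util_small_goods.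
  by apply/subsetP => -[j' [t|]]; rewrite !inE ffunE.
apply: (@le_tight_util_big_good _ _ _ _ j); last by rewrite inE ffunE.
by apply: contra j_neq0 => /eqP j0; apply/eqP/val_inj.
Qed.

Lemma tight_MMS_2k2_ge (R : realFieldType) (k : nat) :
  (2 <= k)%N -> k%:R <= MMS (2 * k - 2) (@tight_util R k k.-1).
Proof.
move=> k_ge2; have k_gt0 : (0 < k)%N by lia.
have c_gt0 : (0 < 2 * k - 2)%N by lia.
(* Parts [0 .. k-2] take the big goods of groups [1 .. k-1]; part [k-1+t]
   takes the [k] small goods with second coordinate [Some t]. *)
pose P : {ffun 'I_k * option 'I_k.-1 -> 'I_(2 * k - 2)} :=
  [ffun g : 'I_k * option 'I_k.-1 => insubd (Ordinal c_gt0)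
    (if g.2 is Some t then (k.-1 + t)%N else (val g.1).-1)].
apply: le_trans (part_min_le_MMS _ P); apply: le_bigmin => [|r _].
  by rewrite tight_util_setT // ler_nat; nia.
have [r_lt|r_ge] := ltnP r k.-1.
  have r1_lt : (r.+1 < k)%N by lia.
  apply: (@le_tight_util_big_good _ _ _ _ (Ordinal r1_lt)) => //.
  by rewrite !inE ffunE /=; apply/eqP/val_inj; rewrite val_insubd /= ltn_ord.
have t_lt : (r - k.-1 < k.-1)%N by have := ltn_ord r; lia.
set Y := [set g : 'I_k * option 'I_k.-1 | g.2 == Some (Ordinal t_lt)].
have sY : Y \subset bundle P r.
  apply/subsetP => -[j o]; rewrite !inE ffunE /= => /eqP ->.
  by apply/eqP/val_inj; rewrite val_insubd /= subnKC // ltn_ord.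
apply: le_trans (subset_le_util (@tight_util_ge0 R k k.-1)
  (@tight_util_additive R k k.-1) sY).
rewrite tight_utilE; set t := Ordinal t_lt.
have -> : Y :&: small_goods k k.-1 = setX setT [set Some t].
  by apply/setP => -[j o]; rewrite !inE; case: eqP => // ->.
by rewrite cardsX cardsT card_ord cards1 muln1 lerDl mulr_ge0.
Qed.

Unset Implicit Arguments.

Theorem mainTheorem2 (R : realFieldType) (k : nat) (hk : (2 <= k)%N) :
  (forall (G : finType) (u : {set G} -> R) (A : {ffun G -> 'I_k}) (i : 'I_k),
     nonneg_util u -> additive_util u -> PROPc u A i k.-1 ->
     [/\ frac_MMS_fair u A i (k%:R^-1),
         one_out_of_MMS_fair u A i (2 * k - 1) &
         (binary_util u -> MMS_fair u A i)])
  /\ (exists (G : finType) (u : {set G} -> R) (A : {ffun G -> 'I_k}) (i : 'I_k),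
        [/\ nonneg_util u, additive_util u, EFc u A i 1, PROPc u A i k.-1 &
            0 < MMS k u /\ u (bundle A i) = k%:R^-1 * MMS k u])
  /\ (exists (G : finType) (u : {set G} -> R) (A : {ffun G -> 'I_k}) (i : 'I_k),
        [/\ nonneg_util u, additive_util u, EFc u A i 1, PROPc u A i k.-1 &
            ~ one_out_of_MMS_fair u A i (2 * k - 2)])
  /\ (forall (G : finType) (u : {set G} -> R) (A : {ffun G -> 'I_k}) (i : 'I_k),
        binary_util u -> MMS_fair u A i -> PROPc u A i k.-1).
Proof.
have k_gt0 : (0 < k)%N by lia.
split; [|split; [|split]].
- move=> G u A i u_ge0 u_add hP; split.
  + exact: PROPc_frac_MMS_fair.
  + exact: PROPc_one_out_of_MMS_fair.
  + by move=> u_bin; rewrite binary_MMS_fairE //; apply/binary_PROPcE.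
- exists _, (@tight_util R k 1), (tight_alloc k 1), (Ordinal k_gt0).
  split; [exact: tight_util_ge0 | exact: tight_util_additive | exact: tight_EF1 |
          exact: tight_PROPc |].
  by rewrite tight_MMS_one // tight_util_bundle0 ltr0n mulVf ?pnatr_eq0 -?lt0n.
- exists _, (@tight_util R k k.-1), (tight_alloc k k.-1), (Ordinal k_gt0).
  split; [exact: tight_util_ge0 | exact: tight_util_additive | exact: tight_EF1 |
          exact: tight_PROPc |].
  rewrite /one_out_of_MMS_fair tight_util_bundle0 => fair.
  by have := le_trans (tight_MMS_2k2_ge R hk) fair; rewrite ler_nat; lia.
- by move=> G u A i u_bin; rewrite binary_MMS_fairE // => /binary_PROPcE; apply.
Qed.
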